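(* For every $t\in\mathtt T_J$: $t$ is a $\to_{d\beta}$-normal form if and only if $t\in\mathtt m$, where $\mathtt m$ and $\mathtt m_{var}$ are the sets of terms generated by the grammar $\mathtt m_{var} ::= x \mid \mathtt m_{var}(\mathtt m, y.\mathtt m_{var})$ and $\mathtt m ::= x \mid \lambda x.\mathtt m \mid \mathtt m_{var}(\mathtt m, y.\mathtt m)$.
   Context: Terms $\mathtt T_J$: $t,u,r ::= x \mid \lambda x.t \mid t(u,y.r)$ ($y$ bound in $r$), up to $\alpha$-equivalence; $\{u/x\}t$ is capture-avoiding substitution. List contexts: $\mathtt D ::= \Diamond \mid t(u,y.\mathtt D)$, $\mathtt D\langle s\rangle$ denoting hole filling. Distant beta: $\mathtt D\langle\lambda x.t\rangle(u,y.r) \mapsto_{d\beta} \{\{u/x\}\mathtt D\langle t\rangle/y\}r$ (variables bound by $\mathtt D$ not free in $u$, $x$ not occurring in $\mathtt D$), and $\to_{d\beta}$ is its closure under all term contexts. A normal form is a term with no $\to_{d\beta}$-reduct. *)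

(* Terms of T_J in de Bruijn representation (terms up to
   alpha-equivalence).  Var n is the variable with de Bruijn index n;
   Lam t binds index 0 in t; App t u r is t(u, y.r) with y = index 0 in r. *)
From Stdlib Require Import Arith.

Inductive term : Type :=
| Var : nat -> term
| Lam : term -> term
| App : term -> term -> term -> term.

Fixpoint lift (d c : nat) (t : term) : term :=
  match t with
  | Var n => if Nat.ltb n c then Var n else Var (n + d)
  | Lam t1 => Lam (lift d (S c) t1)
  | App t1 u r => App (lift d c t1) (lift d c u) (lift d (S c) r)
  end.

(* subst j s t : capture-avoiding substitution of s (a term living in the
   context outside the j innermost binders) for the index j of t; the
   binder for j disappears, so indices above j are decremented. *)
Fixpoint subst (j : nat) (s : term) (t : term) : term :=
  match t with
  | Var n =>
      if Nat.ltb n j then Var n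
      else if Nat.eqb n j then lift j 0 s
      else Var (pred n)
  | Lam t1 => Lam (subst (S j) s t1)
  | App t1 u r => App (subst j s t1) (subst j s u) (subst (S j) s r)
  end.

Inductive lctx : Type :=
| LHole : lctx
| LApp : term -> term -> lctx -> lctx.

Fixpoint fill (D : lctx) (s : term) : term :=
  match D with
  | LHole => s
  | LApp t u D' => App t u (fill D' s)
  end.

Fixpoint depth (D : lctx) : nat :=
  match D with
  | LHole => 0
  | LApp _ _ D' => S (depth D')
  end.

(* Distant beta at the root:
   D<lam x.t>(u, y.r) |-> {{u/x}D<t> / y} r.
   In de Bruijn form the side conditions (variables bound by D not free in u,
   x not occurring in D) are automatic: u is lifted over the depth D binders
   of D, and x (index 0 of the body) only occurs in the body t. *)
Inductive dbeta_root : term -> term -> Prop :=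
| DBeta : forall (D : lctx) (t u r : term),
    dbeta_root (App (fill D (Lam t)) u r)
               (subst 0 (fill D (subst 0 (lift (depth D) 0 u) t)) r).

Inductive dbeta : term -> term -> Prop :=
| dbeta_base : forall t t', dbeta_root t t' -> dbeta t t'
| dbeta_lam : forall t t', dbeta t t' -> dbeta (Lam t) (Lam t')
| dbeta_app1 : forall t t' u r, dbeta t t' -> dbeta (App t u r) (App t' u r)
| dbeta_app2 : forall t u u' r, dbeta u u' -> dbeta (App t u r) (App t u' r)
| dbeta_app3 : forall t u r r', dbeta r r' -> dbeta (App t u r) (App t u r').

Definition normal_form (t : term) : Prop := ~ exists t', dbeta t t'.

Inductive m_var : term -> Prop :=
| mv_var : forall n, m_var (Var n)
| mv_app : forall t u r, m_var t -> m_nf u -> m_var r -> m_var (App t u r)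
with m_nf : term -> Prop :=
| m_var_ : forall n, m_nf (Var n)
| m_lam : forall t, m_nf t -> m_nf (Lam t)
| m_app : forall t u r, m_var t -> m_nf u -> m_nf r -> m_nf (App t u r).

(* A root redex is an application whose head is an abstraction under a list
   context, so a term is normal iff its subterms are normal and no head of an
   application has that shape.  Normal terms of the grammar m are either in
   m_var or of that shape, and m_var excludes it; this makes m exactly the
   normal forms. *)

Definition lctx_lam (t : term) : Prop := exists D s, t = fill D (Lam s).

Lemma m_var_m_nf : forall t, m_var t -> m_nf t.
Proof. induction 1; constructor; auto. Qed.

Lemma m_var_not_lctx_lam : forall t, m_var t -> ~ lctx_lam t.
Proof.
  induction 1 as [n | t u r _ _ _ _ IHr]; intros (D & s & E);
    destruct D as [| t' u' D]; simpl in E; try discriminate.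
  injection E as _ _ Er.
  apply IHr; exists D, s; exact Er.
Qed.

Lemma m_nf_m_var_or_lctx_lam : forall t, m_nf t -> m_var t \/ lctx_lam t.
Proof.
  induction 1 as [n | t _ _ | t u r Ht Hu _ Hr IHr].
  - left; constructor.
  - right; exists LHole, t; reflexivity.
  - destruct IHr as [Vr | (D & s & E)].
    + left; constructor; assumption.
    + right; exists (LApp t u D), s; simpl; rewrite E; reflexivity.
Qed.

Lemma normal_form_var : forall n, normal_form (Var n).
Proof. intros n [t' Hs]; inversion Hs; subst; inversion H. Qed.

Lemma normal_form_lamE : forall t, normal_form (Lam t) <-> normal_form t.
Proof.
  intros t; split.
  - intros N [t' Hs]; apply N; exists (Lam t'); apply dbeta_lam; exact Hs.
  - intros N [t' Hs]; inversion Hs; subst.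
    + inversion H.
    + apply N; eexists; eassumption.
Qed.

Lemma normal_form_appE : forall t u r,
  normal_form (App t u r) <->
  normal_form t /\ normal_form u /\ normal_form r /\ ~ lctx_lam t.
Proof.
  intros t u r; split.
  - intros N; repeat split.
    + intros [t' Hs]; apply N; eexists; apply dbeta_app1; exact Hs.
    + intros [u' Hs]; apply N; eexists; apply dbeta_app2; exact Hs.
    + intros [r' Hs]; apply N; eexists; apply dbeta_app3; exact Hs.
    + intros (D & s & E); subst t; apply N; eexists; apply dbeta_base; constructor.
  - intros (Nt & Nu & Nr & Ht) [t' Hs]; inversion Hs; subst.
    + inversion H; subst; apply Ht; do 2 eexists; reflexivity.
    + apply Nt; eexists; eassumption.
    + apply Nu; eexists; eassumption.
    + apply Nr; eexists; eassumption.
Qed.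

Lemma m_nf_normal_form : forall t, m_nf t -> normal_form t.
Proof.
  induction t as [n | t IH | t IHt u IHu r IHr]; intros M; inversion M; subst.
  - apply normal_form_var.
  - apply normal_form_lamE, IH; assumption.
  - apply normal_form_appE; repeat split.
    + apply IHt, m_var_m_nf; assumption.
    + apply IHu; assumption.
    + apply IHr; assumption.
    + apply m_var_not_lctx_lam; assumption.
Qed.

Lemma normal_form_m_nf : forall t, normal_form t -> m_nf t.
Proof.
  induction t as [n | t IH | t IHt u IHu r IHr]; intros N.
  - constructor.
  - constructor; apply IH, normal_form_lamE, N.
  - apply normal_form_appE in N as (Nt & Nu & Nr & Ht).
    constructor; auto.
    destruct (m_nf_m_var_or_lctx_lam t (IHt Nt)) as [Vt | Lt].
    + exact Vt.
    + contradiction.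
Qed.

Theorem mainTheorem2 : forall t : term, normal_form t <-> m_nf t.
Proof.
  intros t; split.
  - apply normal_form_m_nf.
  - apply m_nf_normal_form.
Qed.
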